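(* Let $f(x)=x^5+px^4+qx^3+rx^2+sx+t$ with real coefficients and let $D$, $L_1$, $L_2$, $L_3$, $M_1$ be as in the context. Suppose $D=0$, $L_1=0$, $L_2=0$ and $L_3\neq0$. Then all roots of $f$ are real, and: if $M_1=0$, $f$ has one quadruple root and one simple root; if $M_1\neq 0$, $f$ has one triple root and one double root.
   Context: Let $\alpha_1,\dots,\alpha_5\in\mathbb{C}$ be the roots of $f$ listed with multiplicity. $D=\prod_{1\le i<j\le 5}(\alpha_i-\alpha_j)^2$ is the discriminant of $f$. $L_3=2p^2-5q$. $L_2=40qs-16p^2s-8rp^3+38rpq+3p^2q^2-12q^3-45r^2$. $L_1=-264ps^2r-12p^3tq^2+36r^3pq-124srpq^2+28srp^3q+260sptq-132p^2qrt+240pr^2t+234sqr^2+32p^4tr+48ptq^3-56sp^3t-80q^2rt+194qs^2p^2-600str-6q^3sp^2+2p^2q^2r^2-12sr^2p^2-54r^4+320s^3-8q^3r^2-8r^3p^3+250qt^2-176q^2s^2+24q^4s-36p^4s^2-100p^2t^2$. $M_1=8p^3r-80sp^2-3p^2q^2+10prq+200sq-75r^2$. *)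

(* Roots live in a numeric closed field C (e.g. algC, or C);
   "real coefficients" = coefficients in Num.real. *)
From HB Require Import structures.
From mathcomp Require Import all_boot all_order all_algebra.
Set Implicit Arguments. Unset Strict Implicit. Unset Printing Implicit Defensive.
Import Order.TTheory GRing.Theory Num.Theory.
Local Open Scope ring_scope.

Section QuinticDefs.
Variable C : numClosedFieldType.

Definition quintic (p q r s t : C) : {poly C} :=
  'X^5 + p%:P * 'X^4 + q%:P * 'X^3 + r%:P * 'X^2 + s%:P * 'X + t%:P.

Definition discr5 (a : 'I_5 -> C) : C :=
  \prod_(i < 5) \prod_(j < 5 | (i < j)%N) (a i - a j) ^+ 2.

Definition L3 (p q r s t : C) : C := 2 * p ^+ 2 - 5 * q.

Definition L2 (p q r s t : C) : C :=
  40 * q * s - 16 * p ^+ 2 * s - 8 * r * p ^+ 3 + 38 * r * p * q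
  + 3 * p ^+ 2 * q ^+ 2 - 12 * q ^+ 3 - 45 * r ^+ 2.

Definition L1 (p q r s t : C) : C :=
  - 264 * p * s ^+ 2 * r - 12 * p ^+ 3 * t * q ^+ 2 + 36 * r ^+ 3 * p * q
  - 124 * s * r * p * q ^+ 2 + 28 * s * r * p ^+ 3 * q + 260 * s * p * t * q
  - 132 * p ^+ 2 * q * r * t + 240 * p * r ^+ 2 * t + 234 * s * q * r ^+ 2
  + 32 * p ^+ 4 * t * r + 48 * p * t * q ^+ 3 - 56 * s * p ^+ 3 * t
  - 80 * q ^+ 2 * r * t + 194 * q * s ^+ 2 * p ^+ 2 - 600 * s * t * r
  - 6 * q ^+ 3 * s * p ^+ 2 + 2 * p ^+ 2 * q ^+ 2 * r ^+ 2
  - 12 * s * r ^+ 2 * p ^+ 2 - 54 * r ^+ 4 + 320 * s ^+ 3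
  - 8 * q ^+ 3 * r ^+ 2 - 8 * r ^+ 3 * p ^+ 3 + 250 * q * t ^+ 2
  - 176 * q ^+ 2 * s ^+ 2 + 24 * q ^+ 4 * s - 36 * p ^+ 4 * s ^+ 2
  - 100 * p ^+ 2 * t ^+ 2.

Definition M1 (p q r s t : C) : C :=
  8 * p ^+ 3 * r - 80 * s * p ^+ 2 - 3 * p ^+ 2 * q ^+ 2 + 10 * p * r * q
  + 200 * s * q - 75 * r ^+ 2.

End QuinticDefs.

From HB Require Import structures.
From mathcomp Require Import all_boot all_order all_algebra.
From mathcomp Require Import ring zify.
Set Implicit Arguments.
Unset Strict Implicit.
Unset Printing Implicit Defensive.
Import Order.TTheory GRing.Theory Num.Theory.
Local Open Scope ring_scope.

(* The hypotheses successively force coincidences among the roots.  If x is a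
   repeated root and y0, y1, y2 are the others, then L1 = 2 V(x, y0, y1, y2)^2
   with V the Vandermonde product, so L1 = 0 yields a root pattern (3,1,1) or
   (2,2,1); on these L2 is 3 V^2 resp. 4 V^2 in the three distinct values, so
   L2 = 0 leaves the patterns (4,1) and (3,2), and L3 vanishes on (5).  On (4,1)
   M1 vanishes, on (3,2) it is -12 (a - b)^6.  Finally, for real coefficients
   conjugation permutes the roots; it cannot swap two roots of different
   multiplicities m, n, since the real number m a + n b would then equal
   m b + n a. *)

Lemma perm_eq_dup (T : eqType) (s : seq T) :
  ~~ uniq s -> exists x s', perm_eq s [:: x, x & s'].
Proof.
elim: s => //= y s IHs; rewrite negb_and negbK => /orP[ys | /IHs[x [s' ss']]].
  by exists y, (rem y s); rewrite perm_cons perm_to_rem.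
by exists x, (y :: s'); apply/permP => P /=; rewrite (permP ss') /=; lia.
Qed.

Fixpoint vandermonde {R : nzRingType} (xs : seq R) : R :=
  if xs is x :: xs' then \prod_(y <- xs') (x - y) * vandermonde xs' else 1.

Lemma vandermonde_eq0 (R : idomainType) (xs : seq R) :
  (vandermonde xs == 0) = ~~ uniq xs.
Proof.
elim: xs => [|x xs IHxs] /=; first by rewrite oner_eq0.
rewrite mulf_eq0 IHxs prodf_seq_eq0 negb_and negbK; congr (_ || _).
apply/hasP/idP => [[y xsy] | xsx]; last by exists x => //; rewrite subrr eqxx.
by rewrite /= subr_eq0 => /eqP->.
Qed.

Lemma real_of_conj_pair (C : numClosedFieldType) (m n : nat) (a b : C) :
  m != n -> (0 < n)%N -> a != b -> a^* \in [:: a; b] ->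
  a *+ m + b *+ n \is Num.real -> a \is Num.real /\ b \is Num.real.
Proof.
move=> mn n_gt0 ab; rewrite !inE => /orP[] /eqP conj_a real_sum.
  have a_real : a \is Num.real by rewrite CrealE conj_a.
  have -> : b = (a *+ m + b *+ n - a *+ m) / n%:R.
    by rewrite addrAC subrr add0r -(mulr_natr b) mulfK // pnatr_eq0 -lt0n.
  by split=> //; rewrite rpredM ?rpredV ?rpred_nat // rpredB ?rpredMn.
suff : (a - b) * (m%:R - n%:R) == 0.
  by rewrite mulf_eq0 !subr_eq0 eqr_nat (negbTE ab) (negbTE mn).
have conj_b : b^* = a by rewrite -conj_a conjCK.
have := conj_Creal real_sum; rewrite rmorphD !rmorphMn /= conj_a conj_b => sum_eq.
have -> : (a - b) * (m%:R - n%:R) = a *+ m + b *+ n - (b *+ m + a *+ n) by ring.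
by rewrite -sum_eq subrr.
Qed.

Section QuinticRoots.

Variables (C : numClosedFieldType) (p q r s t : C).

Definition quintic_roots (rs : seq C) : Prop :=
  quintic p q r s t = \prod_(x <- rs) ('X - x%:P).

Lemma quintic_roots_perm (rs rs' : seq C) :
  perm_eq rs rs' -> quintic_roots rs -> quintic_roots rs'.
Proof. by rewrite /quintic_roots => rs_rs' ->; apply: perm_big. Qed.

Lemma mem_quintic_roots (rs rs' : seq C) :
  quintic_roots rs -> quintic_roots rs' -> rs =i rs'.
Proof. by move=> f_rs f_rs' x; rewrite -!root_prod_XsubC -f_rs -f_rs'. Qed.

Lemma quintic_inj (p' q' r' s' t' : C) :
  quintic p q r s t = quintic p' q' r' s' t' ->
  [/\ p = p', q = q', r = r', s = s' & t = t'].
Proof.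
move=> f_eq; have coef_eq k := congr1 (fun g : {poly C} => g`_k) f_eq.
move: (coef_eq 4%N) (coef_eq 3%N) (coef_eq 2%N) (coef_eq 1%N) (coef_eq 0%N).
rewrite /quintic /= !(coefD, coefCM, coefXn, coefX, coefC) /=.
by rewrite !(mulr0, mulr1, add0r, addr0).
Qed.

Lemma quintic_rootsE (x0 x1 x2 x3 x4 : C) :
  quintic_roots [:: x0; x1; x2; x3; x4] ->
  [/\ p = - (x0 + x1 + x2 + x3 + x4),
      q = x0 * x1 + x0 * x2 + x0 * x3 + x0 * x4 + x1 * x2 + x1 * x3 + x1 * x4
          + x2 * x3 + x2 * x4 + x3 * x4,
      r = - (x0 * x1 * x2 + x0 * x1 * x3 + x0 * x1 * x4 + x0 * x2 * x3
          + x0 * x2 * x4 + x0 * x3 * x4 + x1 * x2 * x3 + x1 * x2 * x4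
          + x1 * x3 * x4 + x2 * x3 * x4),
      s = x0 * x1 * x2 * x3 + x0 * x1 * x2 * x4 + x0 * x1 * x3 * x4
          + x0 * x2 * x3 * x4 + x1 * x2 * x3 * x4
    & t = - (x0 * x1 * x2 * x3 * x4)].
Proof.
rewrite /quintic_roots => f_eq; apply: quintic_inj; rewrite f_eq.
by rewrite !big_cons big_nil /quintic !(polyCD, polyCN, polyCM); ring.
Qed.

Lemma L1_double (x y0 y1 y2 : C) : quintic_roots [:: x; x; y0; y1; y2] ->
  L1 p q r s t = 2 * vandermonde [:: x; y0; y1; y2] ^+ 2.
Proof.
by case/quintic_rootsE=> -> -> -> -> ->; rewrite /L1 /= !big_cons !big_nil; ring.
Qed.

Lemma L2_triple (x y z : C) : quintic_roots [:: x; x; x; y; z] ->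
  L2 p q r s t = 3 * vandermonde [:: x; y; z] ^+ 2.
Proof.
by case/quintic_rootsE=> -> -> -> -> ->; rewrite /L2 /= !big_cons !big_nil; ring.
Qed.

Lemma L2_two_doubles (x y z : C) : quintic_roots [:: x; x; y; y; z] ->
  L2 p q r s t = 4 * vandermonde [:: x; y; z] ^+ 2.
Proof.
by case/quintic_rootsE=> -> -> -> -> ->; rewrite /L2 /= !big_cons !big_nil; ring.
Qed.

Lemma L3_quintuple (x : C) : quintic_roots [:: x; x; x; x; x] -> L3 p q r s t = 0.
Proof. by case/quintic_rootsE=> -> -> _ _ _; rewrite /L3; ring. Qed.

Lemma M1_quadruple (a b : C) : quintic_roots [:: a; a; a; a; b] -> M1 p q r s t = 0.
Proof. by case/quintic_rootsE=> -> -> -> -> _; rewrite /M1; ring. Qed.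

Lemma M1_triple_double (a b : C) : quintic_roots [:: a; a; a; b; b] ->
  M1 p q r s t = - 12 * (a - b) ^+ 6.
Proof. by case/quintic_rootsE=> -> -> -> -> _; rewrite /M1; ring. Qed.

Lemma double_root_split (x y0 y1 y2 : C) :
  L1 p q r s t = 0 -> quintic_roots [:: x; x; y0; y1; y2] ->
  (exists u v, quintic_roots [:: x; x; x; u; v]) \/
  (exists z w, quintic_roots [:: x; x; z; z; w]).
Proof.
move=> L1_0 f_roots; move/eqP: (L1_double f_roots).
rewrite L1_0 eq_sym mulf_eq0 pnatr_eq0 orFb sqrf_eq0 vandermonde_eq0.
rewrite cons_uniq negb_and negbK => /orP[/perm_to_rem | /perm_eq_dup[z [ys' ys_z]]].
- case: (rem _ _) => [|u [|v [|? ?]]] ys_x; try by move/perm_size/eqP: ys_x.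
  left; exists u, v; apply: quintic_roots_perm f_roots.
  by apply/permP => P; have /= := permP ys_x P; lia.
- case: ys' ys_z => [|w [|? ?]] ys_z; try by move/perm_size/eqP: ys_z.
  right; exists z, w; apply: quintic_roots_perm f_roots.
  by apply/permP => P; have /= := permP ys_z P; lia.
Qed.

Lemma triple_root_split (x u v : C) :
  L2 p q r s t = 0 -> quintic_roots [:: x; x; x; u; v] ->
  exists a b, quintic_roots [:: a; a; a; a; b] \/ quintic_roots [:: a; a; a; b; b].
Proof.
move=> L2_0 f_roots; move/eqP: (L2_triple f_roots).
rewrite L2_0 eq_sym mulf_eq0 pnatr_eq0 orFb sqrf_eq0 vandermonde_eq0 /= !inE.
rewrite !negb_and !negbK orbF -orbA => /or3P[] /eqP uv; subst.
- by exists u, v; left.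
- by exists v, u; left; apply: quintic_roots_perm f_roots; apply/permP => P /=; lia.
- by exists x, v; right.
Qed.

Lemma two_doubles_split (x y z : C) :
  L2 p q r s t = 0 -> quintic_roots [:: x; x; y; y; z] ->
  exists a b, quintic_roots [:: a; a; a; a; b] \/ quintic_roots [:: a; a; a; b; b].
Proof.
move=> L2_0 f_roots; move/eqP: (L2_two_doubles f_roots).
rewrite L2_0 eq_sym mulf_eq0 pnatr_eq0 orFb sqrf_eq0 vandermonde_eq0 /= !inE.
rewrite !negb_and !negbK orbF -orbA => /or3P[] /eqP xyz; subst.
- by exists y, z; left.
- by exists z, y; right; apply: quintic_roots_perm f_roots; apply/permP => P /=; lia.
- by exists z, x; right; apply: quintic_roots_perm f_roots; apply/permP => P /=; lia.
Qed.

Lemma quintic_two_roots (rs : seq C) :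
  L1 p q r s t = 0 -> L2 p q r s t = 0 -> L3 p q r s t != 0 ->
  size rs = 5%N -> ~~ uniq rs -> quintic_roots rs ->
  exists a b, a != b /\
    (quintic_roots [:: a; a; a; a; b] \/ quintic_roots [:: a; a; a; b; b]).
Proof.
move=> L1_0 L2_0 L3_neq0 size_rs /perm_eq_dup[x [rs' rs_x]] /(quintic_roots_perm rs_x).
case: rs' rs_x => [|y0 [|y1 [|y2 [|? ?]]]] rs_x;
  try by move/perm_size/eqP: rs_x; rewrite size_rs.
move=> f_roots {rs_x}.
have [a [b f_ab]] : exists a b,
    quintic_roots [:: a; a; a; a; b] \/ quintic_roots [:: a; a; a; b; b].
  by case: (double_root_split L1_0 f_roots) => -[y [z f_yz]];
    [exact: triple_root_split L2_0 f_yz | exact: two_doubles_split L2_0 f_yz].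
exists a, b; split=> //; apply: contraNneq L3_neq0 => eq_ab; subst b.
by apply/eqP; case: f_ab; apply: L3_quintuple.
Qed.

Section RealCoefficients.

Hypotheses (p_real : p \is Num.real) (q_real : q \is Num.real)
  (r_real : r \is Num.real) (s_real : s \is Num.real) (t_real : t \is Num.real).

Lemma quintic_roots_conj (rs : seq C) (x : C) :
  quintic_roots rs -> x \in rs -> x^* \in rs.
Proof.
rewrite -!root_prod_XsubC => <- /rootP fx; apply/rootP.
have <- : map_poly Num.conj (quintic p q r s t) = quintic p q r s t.
  rewrite /quintic !(rmorphD, rmorphM, rmorphXn) /= !map_polyC /= map_polyX.
  by rewrite !conj_Creal.
by rewrite horner_map fx rmorph0.
Qed.

Lemma quintic_roots_real (rs : seq C) (m n : nat) (a b : C) :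
  (0 < m)%N -> (0 < n)%N -> m != n -> a != b ->
  quintic_roots rs -> quintic_roots (nseq m a ++ nseq n b) ->
  a *+ m + b *+ n = - p -> {in rs, forall x, x \is Num.real}.
Proof.
move=> m_gt0 n_gt0 mn ab f_rs f_ab sum_ab.
have [a_real b_real] : a \is Num.real /\ b \is Num.real.
  apply: (real_of_conj_pair mn n_gt0 ab); last by rewrite sum_ab rpredN.
  have : a^* \in nseq m a ++ nseq n b.
    by apply: (quintic_roots_conj (x := a) f_ab); rewrite mem_cat mem_nseq m_gt0 eqxx.
  by rewrite mem_cat !mem_nseq m_gt0 n_gt0 !in_cons in_nil orbF.
move=> x; rewrite (mem_quintic_roots f_rs f_ab) mem_cat !mem_nseq.
by case/orP=> /andP[_ /eqP->].
Qed.

End RealCoefficients.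

End QuinticRoots.

Lemma discr5_eq0_noninjective (C : numClosedFieldType) (alpha : 'I_5 -> C) :
  discr5 alpha = 0 -> ~~ injectiveb alpha.
Proof.
move=> /eqP /prodf_eq0[i _ /prodf_eq0[j lt_ij]].
rewrite sqrf_eq0 subr_eq0 => /eqP eq_ij; apply/injectiveP => inj_alpha.
by rewrite (inj_alpha _ _ eq_ij) ltnn in lt_ij.
Qed.

Theorem mainTheorem4 (C : numClosedFieldType) (p q r s t : C)
  (alpha : 'I_5 -> C) :
  p \is Num.real -> q \is Num.real -> r \is Num.real ->
  s \is Num.real -> t \is Num.real ->
  quintic p q r s t = \prod_(i < 5) ('X - (alpha i)%:P) ->
  discr5 alpha = 0 -> L1 p q r s t = 0 -> L2 p q r s t = 0 ->
  L3 p q r s t != 0 ->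
  (forall i, alpha i \is Num.real) /\
  (M1 p q r s t = 0 ->
     exists a b : C, a != b /\
       quintic p q r s t = ('X - a%:P) ^+ 4 * ('X - b%:P)) /\
  (M1 p q r s t != 0 ->
     exists a b : C, a != b /\
       quintic p q r s t = ('X - a%:P) ^+ 3 * ('X - b%:P) ^+ 2).
Proof.
move=> Rp Rq Rr Rs Rt f_alpha /discr5_eq0_noninjective alpha_dup L1_0 L2_0 L3_neq0.
have f_codom : quintic_roots p q r s t (codom alpha).
  by rewrite /quintic_roots f_alpha big_image.
have size_codom5 : size (codom alpha) = 5%N by rewrite size_codom card_ord.
have [a [b [ab [f_ab | f_ab]]]] :=
  quintic_two_roots L1_0 L2_0 L3_neq0 size_codom5 alpha_dup f_codom.
- have sum_ab : a *+ 4 + b *+ 1 = - p by case: (quintic_rootsE f_ab) => -> *; ring.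
  have real_codom := quintic_roots_real Rp Rq Rr Rs Rt (m := 4) (n := 1)
    isT isT isT ab f_codom f_ab sum_ab.
  split; first by move=> i; apply/real_codom/codom_f.
  split=> [_ | ]; last by rewrite (M1_quadruple f_ab) eqxx.
  by exists a, b; split=> //; rewrite f_ab !big_cons big_nil; ring.
- have sum_ab : a *+ 3 + b *+ 2 = - p by case: (quintic_rootsE f_ab) => -> *; ring.
  have real_codom := quintic_roots_real Rp Rq Rr Rs Rt (m := 3) (n := 2)
    isT isT isT ab f_codom f_ab sum_ab.
  split; first by move=> i; apply/real_codom/codom_f.
  split=> [|_]; last by exists a, b; split=> //; rewrite f_ab !big_cons big_nil; ring.
  rewrite (M1_triple_double f_ab) => /eqP.
  by rewrite mulf_eq0 oppr_eq0 pnatr_eq0 expf_eq0 subr_eq0 (negbTE ab) andbF.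
Qed.
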